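(* Let $X$ be an infinite dimensional Banach space and let $(X_n)_{n=1}^\infty$ be a sequence of Banach spaces over $\mathbb{K}$ ($\mathbb{K}=\mathbb{R}$ or $\mathbb{C}$) having a subsequence $(X_{n_k})_{k=1}^\infty$ that contains isomorphs of $X$ uniformly. Then: (a) for every $0<p<\infty$, the set $\left(\sum_n X_n\right)_p\setminus \left(\sum_n X_n\right)_p^-$ is $\dim X$-spaceable in $\left(\sum_n X_n\right)_p$; (b) the set $\left(\sum_n X_n\right)_0\setminus \bigcup_{p>0}\left(\sum_n X_n\right)_p$ is $\dim X$-spaceable in $\left(\sum_n X_n\right)_0$.
   Context: For $0<p<\infty$, $\left(\sum_n X_n\right)_p$ is the space of all sequences $(x_n)_{n=1}^\infty$ with $x_n\in X_n$ for all $n$ and $\|(x_n)\|_p:=\left(\sum_{n=1}^\infty\|x_n\|_{X_n}^p\right)^{1/p}<\infty$; it is a Banach space for $p\ge1$ and a $p$-Banach space (complete $p$-normed) for $0<p<1$. $\left(\sum_n X_n\right)_0$ is the Banach space of sequences $(x_n)$ with $x_n\in X_n$ and $\|x_n\|_{X_n}\to0$, with the sup norm. $\left(\sum_n X_n\right)_p^-:=\bigcup_{0<q<p}\left(\sum_n X_n\right)_q$, viewed as a subset of $\left(\sum_n X_n\right)_p$; similarly $\bigcup_{p>0}\left(\sum_n X_n\right)_p\subseteq\left(\sum_n X_n\right)_0$. A family $(Y_i)_{i\in I}$ of Banach spaces contains isomorphs of $X$ uniformly if there exist $\delta>0$ and linear isomorphisms onto their images (isomorphic embeddings) $R_i\colon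 X\to Y_i$ with $\max\{\|R_i\|,\|R_i^{-1}\|\}\le\delta$ for every $i\in I$. For a cardinal $\mu$ and a subset $A$ of a topological vector space $E$, $A$ is called $\mu$-spaceable if $A\cup\{0\}$ contains a closed linear subspace of $E$ of algebraic dimension $\mu$. $\dim X$ denotes the algebraic (Hamel) dimension of $X$. *)

From Stdlib Require Import Reals List.
Open Scope R_scope.

(* ---------- Scalars: b = false means K = R, b = true means K = C = R*R ---------- *)
Definition Kt (b : bool) : Type := if b then (R * R)%type else R.

Definition K0 (b : bool) : Kt b :=
  match b return Kt b with true => (0, 0) | false => 0 end.
Definition K1 (b : bool) : Kt b :=
  match b return Kt b with true => (1, 0) | false => 1 end.
Definition Kadd (b : bool) : Kt b -> Kt b -> Kt b :=
  match b return Kt b -> Kt b -> Kt b with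
  | true => fun z w => (fst z + fst w, snd z + snd w)
  | false => fun x y => x + y
  end.
Definition Kmul (b : bool) : Kt b -> Kt b -> Kt b :=
  match b return Kt b -> Kt b -> Kt b with
  | true => fun z w => (fst z * fst w - snd z * snd w, fst z * snd w + snd z * fst w)
  | false => fun x y => x * y
  end.
Definition Kabs (b : bool) : Kt b -> R :=
  match b return Kt b -> R with
  | true => fun z => sqrt (fst z * fst z + snd z * snd z)
  | false => fun x => Rabs x
  end.
Definition Kopp1 (b : bool) : Kt b :=
  match b return Kt b with true => (-1, 0) | false => -1 end.

Record Banach (b : bool) := {
  V :> Type;
  vzero : V;
  vadd : V -> V -> V;
  vopp : V -> V;
  vscal : Kt b -> V -> V;
  vnorm : V -> R;
  vadd_assoc : forall x y z, vadd x (vadd y z) = vadd (vadd x y) z;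
  vadd_comm : forall x y, vadd x y = vadd y x;
  vadd_0 : forall x, vadd x vzero = x;
  vadd_opp : forall x, vadd x (vopp x) = vzero;
  vscal_assoc : forall a c x, vscal a (vscal c x) = vscal (Kmul b a c) x;
  vscal_1 : forall x, vscal (K1 b) x = x;
  vscal_distr_v : forall a x y, vscal a (vadd x y) = vadd (vscal a x) (vscal a y);
  vscal_distr_K : forall a c x, vscal (Kadd b a c) x = vadd (vscal a x) (vscal c x);
  vnorm_nonneg : forall x, 0 <= vnorm x;
  vnorm_eq0 : forall x, vnorm x = 0 -> x = vzero;
  vnorm_scal : forall a x, vnorm (vscal a x) = Kabs b a * vnorm x;
  vnorm_tri : forall x y, vnorm (vadd x y) <= vnorm x + vnorm y;
  vcomplete : forall u : nat -> V,
    (forall eps, 0 < eps -> exists N, forall m n, (N <= m)%nat -> (N <= n)%nat ->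
        vnorm (vadd (u m) (vopp (u n))) < eps) ->
    exists l, forall eps, 0 < eps -> exists N, forall n, (N <= n)%nat ->
        vnorm (vadd (u n) (vopp l)) < eps
}.
Arguments vzero {b} _.
Arguments vadd {b} _ _ _.
Arguments vopp {b} _ _.
Arguments vscal {b} _ _ _.
Arguments vnorm {b} _ _.

Definition lincomb {b : bool} {W I : Type} (add : W -> W -> W) (scal : Kt b -> W -> W)
  (z : W) (c : I -> Kt b) (f : I -> W) (l : list I) : W :=
  fold_right (fun i acc => add (scal (c i) (f i)) acc) z l.

Definition hamel_basis {b : bool} {W I : Type} (add : W -> W -> W) (scal : Kt b -> W -> W)
  (z : W) (S : W -> Prop) (f : I -> W) : Prop :=
  (forall i, S (f i)) /\
  (forall (l : list I) (c : I -> Kt b), NoDup l -> lincomb add scal z c f l = z ->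
      forall i, In i l -> c i = K0 b) /\
  (forall w, S w -> exists (l : list I) (c : I -> Kt b), w = lincomb add scal z c f l).

Definition infinite_dim {b : bool} (X : Banach b) : Prop :=
  ~ exists l : list (V b X), forall x : V b X,
      exists c : V b X -> Kt b, x = lincomb (vadd X) (vscal X) (vzero X) c (fun v => v) l.

Definition is_linear {b : bool} (X Y : Banach b) (T : V b X -> V b Y) : Prop :=
  (forall x y, T (vadd X x y) = vadd Y (T x) (T y)) /\
  (forall a x, T (vscal X a x) = vscal Y a (T x)).

(* (Y k)_k contains isomorphs of X uniformly: linear R_k with ||R_k|| <= delta
   and ||R_k^{-1}|| <= delta (on the image). *)
Definition unif_isomorphs {b : bool} (X : Banach b) (Y : nat -> Banach b) : Prop :=
  exists delta, 0 < delta /\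
    forall k, exists Rk : V b X -> V b (Y k),
      is_linear X (Y k) Rk /\
      (forall x, vnorm (Y k) (Rk x) <= delta * vnorm X x) /\
      (forall x, vnorm X x <= delta * vnorm (Y k) (Rk x)).

Definition Seq {b : bool} (Xs : nat -> Banach b) : Type := forall n, V b (Xs n).
Definition seq0 {b} (Xs : nat -> Banach b) : Seq Xs := fun n => vzero (Xs n).
Definition seq_add {b} (Xs : nat -> Banach b) (x y : Seq Xs) : Seq Xs :=
  fun n => vadd (Xs n) (x n) (y n).
Definition seq_scal {b} (Xs : nat -> Banach b) (a : Kt b) (x : Seq Xs) : Seq Xs :=
  fun n => vscal (Xs n) a (x n).
Definition seq_dnorm {b} (Xs : nat -> Banach b) (x y : Seq Xs) (n : nat) : R :=
  vnorm (Xs n) (vadd (Xs n) (x n) (vopp (Xs n) (y n))).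

Definition rpow (t p : R) : R := if Rlt_dec 0 t then Rpower t p else 0.

Definition in_lp {b} (Xs : nat -> Banach b) (p : R) (x : Seq Xs) : Prop :=
  exists s, Un_cv (sum_f_R0 (fun n => rpow (vnorm (Xs n) (x n)) p)) s.

Definition in_c0 {b} (Xs : nat -> Banach b) (x : Seq Xs) : Prop :=
  Un_cv (fun n => vnorm (Xs n) (x n)) 0.

(* closedness of S in (sum X_n)_p: the topology is given by the p-norm / norm,
   i.e. y_k -> x iff sum_n ||y_k(n) - x(n)||^p -> 0 *)
Definition closed_lp {b} (Xs : nat -> Banach b) (p : R) (S : Seq Xs -> Prop) : Prop :=
  forall (y : nat -> Seq Xs) (x : Seq Xs),
    (forall k, S (y k)) -> in_lp Xs p x ->
    (forall eps, 0 < eps -> exists K, forall k, (K <= k)%nat -> forall N,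
        sum_f_R0 (fun n => rpow (seq_dnorm Xs (y k) x n) p) N <= eps) ->
    S x.

Definition closed_c0 {b} (Xs : nat -> Banach b) (S : Seq Xs -> Prop) : Prop :=
  forall (y : nat -> Seq Xs) (x : Seq Xs),
    (forall k, S (y k)) -> in_c0 Xs x ->
    (forall eps, 0 < eps -> exists K, forall k, (K <= k)%nat -> forall n,
        seq_dnorm Xs (y k) x n <= eps) ->
    S x.

Definition is_subspace {b} (Xs : nat -> Banach b) (S : Seq Xs -> Prop) : Prop :=
  S (seq0 Xs) /\ (forall x y, S x -> S y -> S (seq_add Xs x y)) /\
  (forall a x, S x -> S (seq_scal Xs a x)).

(* algebraic dimension of the subspace S equals dim X: Hamel bases indexed by the same set *)
Definition same_dim {b} (X : Banach b) (Xs : nat -> Banach b) (S : Seq Xs -> Prop) : Prop :=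
  exists (I : Type) (e : I -> V b X) (f : I -> Seq Xs),
    hamel_basis (vadd X) (vscal X) (vzero X) (fun _ => True) e /\
    hamel_basis (seq_add Xs) (seq_scal Xs) (seq0 Xs) S f.

Definition spaceable {b} (X : Banach b) (Xs : nat -> Banach b)
  (E : Seq Xs -> Prop) (closed : (Seq Xs -> Prop) -> Prop) (A : Seq Xs -> Prop) : Prop :=
  exists W : Seq Xs -> Prop,
    is_subspace Xs W /\ (forall x, W x -> E x) /\ closed W /\
    (forall x, W x -> A x \/ x = seq0 Xs) /\ same_dim X Xs W.

(* Let (n_k) be the subsequence and R_k : X -> X_{n_k} the linear maps with
   ‖R_k x‖ <= δ‖x‖ and ‖x‖ <= δ‖R_k x‖.  For a positive weight sequence (w_k)
   the weighted diagonal embedding T_w places w_k R_k u in coordinate n_k and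
   0 in every coordinate outside the subsequence.  Then:
   - T_w is linear and injective, so a Hamel basis of X (which exists by
     Zorn's lemma) is mapped onto a Hamel basis of its range W = T_w(X);
   - W is closed under coordinatewise limits, because coordinate n_0 controls
     the norm of X and X is complete;
   - Σ_n ‖(T_w u)_n‖^q lies between (‖u‖/δ)^q Σ_k w_k^q and (δ‖u‖)^q Σ_k w_k^q,
     so whether T_w u (u ≠ 0) lies in (Σ X_n)_q depends on the weights only. *)

From Stdlib Require Import Reals List Classical Lra Lia ClassicalEpsilon
  FunctionalExtensionality ProofIrrelevance FinFun.
From mathcomp Require classical_sets.
Open Scope R_scope.

Definition Kr (b : bool) (r : R) : Kt b :=
  match b return Kt b with true => (r, 0) | false => r end.

(* Multiplicative inverse in K (meaningful for nonzero scalars only). *)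
Definition Kinv (b : bool) : Kt b -> Kt b :=
  match b return Kt b -> Kt b with
  | true => fun z => (fst z / (fst z * fst z + snd z * snd z),
                      - snd z / (fst z * fst z + snd z * snd z))
  | false => fun x => / x
  end.

Lemma Kadd_00 b : Kadd b (K0 b) (K0 b) = K0 b.
Proof. destruct b; simpl; f_equal; ring. Qed.

Lemma Kmul_comm b a c : Kmul b a c = Kmul b c a.
Proof. destruct b; simpl; [destruct a, c; simpl; f_equal; ring | ring]. Qed.

Lemma Kabs_K0 b : Kabs b (K0 b) = 0.
Proof.
destruct b; simpl; [|apply Rabs_R0].
replace (0 * 0 + 0 * 0) with 0 by ring. apply sqrt_0.
Qed.

Lemma Kabs_Kr b r : Kabs b (Kr b r) = Rabs r.
Proof.
destruct b; simpl; [|reflexivity].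
replace (r * r + 0 * 0) with (Rsqr r) by (unfold Rsqr; ring). apply sqrt_Rsqr_abs.
Qed.

Lemma Kabs_opp1 b : Kabs b (Kopp1 b) = 1.
Proof.
destruct b; simpl.
- replace (-1 * -1 + 0 * 0) with 1 by ring. apply sqrt_1.
- unfold Rabs; destruct Rcase_abs; lra.
Qed.

Lemma Kadd_1_opp1 b : Kadd b (K1 b) (Kopp1 b) = K0 b.
Proof. destruct b; simpl; f_equal; ring. Qed.

Lemma Kinv_l b a : a <> K0 b -> Kmul b (Kinv b a) a = K1 b.
Proof.
destruct b; simpl; intro Ha.
- destruct a as [x y]; simpl.
  assert (Hn : x * x + y * y <> 0).
  { intro E. apply Ha. assert (x = 0) by nra. assert (y = 0) by nra. subst; reflexivity. }
  f_equal; field; exact Hn.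
- apply Rinv_l; exact Ha.
Qed.

Section BanachAlgebra.
Context {b : bool} (Y : Banach b).

Lemma add_0_l x : vadd Y (vzero Y) x = x.
Proof. rewrite vadd_comm; apply vadd_0. Qed.

Lemma add_cancel_l x y z : vadd Y x y = vadd Y x z -> y = z.
Proof.
intro H. assert (E : forall t, vadd Y (vopp Y x) (vadd Y x t) = t).
{ intro t. rewrite vadd_assoc, (vadd_comm _ Y (vopp Y x)), vadd_opp. apply add_0_l. }
rewrite <- (E y), <- (E z), H. reflexivity.
Qed.

Lemma scal_K0 x : vscal Y (K0 b) x = vzero Y.
Proof.
apply (add_cancel_l (vscal Y (K0 b) x)).
rewrite vadd_0, <- vscal_distr_K, Kadd_00. reflexivity.
Qed.

Lemma scal_0 a : vscal Y a (vzero Y) = vzero Y.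
Proof.
apply (add_cancel_l (vscal Y a (vzero Y))).
rewrite vadd_0, <- vscal_distr_v, vadd_0. reflexivity.
Qed.

Lemma opp_scal x : vopp Y x = vscal Y (Kopp1 b) x.
Proof.
apply (add_cancel_l x). rewrite vadd_opp.
rewrite <- (vscal_1 _ Y x) at 1. rewrite <- vscal_distr_K, Kadd_1_opp1, scal_K0. reflexivity.
Qed.

Lemma norm_0 : vnorm Y (vzero Y) = 0.
Proof. rewrite <- (scal_K0 (vzero Y)), vnorm_scal, Kabs_K0; ring. Qed.

Lemma norm_opp x : vnorm Y (vopp Y x) = vnorm Y x.
Proof. rewrite opp_scal, vnorm_scal, Kabs_opp1; ring. Qed.

Lemma opp_add x y : vopp Y (vadd Y x y) = vadd Y (vopp Y x) (vopp Y y).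
Proof. rewrite !opp_scal. apply vscal_distr_v. Qed.

Lemma opp_opp x : vopp Y (vopp Y x) = x.
Proof.
apply (add_cancel_l (vopp Y x)). rewrite vadd_opp, vadd_comm, vadd_opp. reflexivity.
Qed.

Lemma sub_eq x y : vadd Y x (vopp Y y) = vzero Y -> x = y.
Proof.
intro H. apply (add_cancel_l (vopp Y y)).
rewrite vadd_comm, H, vadd_comm, vadd_opp. reflexivity.
Qed.

Lemma dist_tri x y z :
  vnorm Y (vadd Y x (vopp Y z)) <=
  vnorm Y (vadd Y x (vopp Y y)) + vnorm Y (vadd Y y (vopp Y z)).
Proof.
replace (vadd Y x (vopp Y z)) with (vadd Y (vadd Y x (vopp Y y)) (vadd Y y (vopp Y z))).
- apply vnorm_tri.
- rewrite <- vadd_assoc, (vadd_assoc _ Y (vopp Y y)), (vadd_comm _ Y (vopp Y y)),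
    vadd_opp, add_0_l.
  reflexivity.
Qed.

Lemma dist_sym x y : vnorm Y (vadd Y x (vopp Y y)) = vnorm Y (vadd Y y (vopp Y x)).
Proof. rewrite <- norm_opp, opp_add, opp_opp, vadd_comm. reflexivity. Qed.

Lemma eq_of_small x y :
  (forall eps, 0 < eps -> vnorm Y (vadd Y x (vopp Y y)) <= eps) -> x = y.
Proof.
intro H. apply sub_eq, vnorm_eq0.
pose proof (vnorm_nonneg _ Y (vadd Y x (vopp Y y))) as H0.
destruct (Rle_lt_or_eq_dec _ _ H0) as [h|h]; [|auto].
assert (hh : 0 < vnorm Y (vadd Y x (vopp Y y)) / 2) by lra. specialize (H _ hh); lra.
Qed.

Definition converges (u : nat -> V b Y) (l : V b Y) : Prop :=
  forall eps, 0 < eps -> exists K, forall k, (K <= k)%nat ->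
    vnorm Y (vadd Y (u k) (vopp Y l)) <= eps.

Lemma limit_unique u l l' : converges u l -> converges u l' -> l = l'.
Proof.
intros Hl Hl'. apply eq_of_small. intros eps He.
destruct (Hl (eps / 2)) as [K1 HK1]; [lra|].
destruct (Hl' (eps / 2)) as [K2 HK2]; [lra|].
specialize (HK1 (Nat.max K1 K2) ltac:(lia)). specialize (HK2 (Nat.max K1 K2) ltac:(lia)).
rewrite dist_sym in HK1.
pose proof (dist_tri l (u (Nat.max K1 K2)) l'). lra.
Qed.

Lemma complete_converges u :
  (forall eps, 0 < eps -> exists N, forall m n, (N <= m)%nat -> (N <= n)%nat ->
     vnorm Y (vadd Y (u m) (vopp Y (u n))) < eps) ->
  exists l, converges u l.
Proof.
intro Hc. destruct (vcomplete _ Y u Hc) as [l Hl]. exists l.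
intros eps He. destruct (Hl eps He) as [N HN]. exists N. intros k Hk. left; auto.
Qed.

End BanachAlgebra.


Lemma zorn_sets (T : Type) (P : (T -> Prop) -> Prop) :
  (forall F : (T -> Prop) -> Prop, (forall A, F A -> P A) ->
     (forall A B, F A -> F B -> (forall x, A x -> B x) \/ (forall x, B x -> A x)) ->
     P (fun x => exists2 A, F A & A x)) ->
  exists A, P A /\ forall B, (forall x, A x -> B x) -> P B -> forall x, B x -> A x.
Proof.
intros H.
destruct (@classical_sets.Zorn_bigcup T P) as [A [PA HA]]; [exact H|].
exists A; split; [exact PA|].
intros B AB PB x Bx. apply NNPP; intro nA.
apply (HA B); [|exact PB].
split; [exact AB|]. intro BA. apply nA, BA, Bx.
Qed.

Section HamelBasis.
Context {b : bool} (X : Banach b).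

Definition lc (c : V b X -> Kt b) (l : list (V b X)) : V b X :=
  lincomb (vadd X) (vscal X) (vzero X) c (fun v => v) l.

Definition indep (S : V b X -> Prop) : Prop :=
  forall l c, NoDup l -> (forall v, In v l -> S v) -> lc c l = vzero X ->
    forall v, In v l -> c v = K0 b.

Definition in_span (S : V b X -> Prop) (w : V b X) : Prop :=
  exists l c, (forall v, In v l -> S v) /\ w = lc c l.

Lemma lc_app c l1 l2 : lc c (l1 ++ l2) = vadd X (lc c l1) (lc c l2).
Proof.
unfold lc. induction l1 as [|v l1 IH]; simpl.
- rewrite add_0_l. reflexivity.
- rewrite IH, vadd_assoc. reflexivity.
Qed.

Lemma lc_scal a c l : vscal X a (lc c l) = lc (fun v => Kmul b a (c v)) l.
Proof.
unfold lc. induction l as [|v l IH]; simpl.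
- apply scal_0.
- rewrite vscal_distr_v, IH, vscal_assoc. reflexivity.
Qed.

Lemma chain_cover (F : (V b X -> Prop) -> Prop) :
  (forall A B, F A -> F B -> (forall x, A x -> B x) \/ (forall x, B x -> A x)) ->
  forall l, (forall v, In v l -> exists2 A, F A & A v) ->
  l = nil \/ exists A, F A /\ forall v, In v l -> A v.
Proof.
intros Htot l. induction l as [|w l IH]; intro Hl; [left; reflexivity|right].
destruct (Hl w (or_introl eq_refl)) as [Aw FAw Aww].
destruct IH as [E|[B [FB HB]]].
- intros v Hv; apply Hl; right; exact Hv.
- subst l. exists Aw; split; [exact FAw|]. intros v [<-|[]]; exact Aww.
- destruct (Htot Aw B FAw FB) as [h|h].
  + exists B; split; [exact FB|]. intros v [<-|Hv]; auto.
  + exists Aw; split; [exact FAw|]. intros v [<-|Hv]; auto.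
Qed.

Lemma exists_max_indep :
  exists M, indep M /\ forall B, (forall x, M x -> B x) -> indep B -> forall x, B x -> M x.
Proof.
apply zorn_sets. intros F HF Htot l c Hnd Hl Hz v Hv.
destruct (chain_cover F Htot l Hl) as [E|[A [FA HA]]].
- subst l; destruct Hv.
- exact (HF A FA l c Hnd HA Hz v Hv).
Qed.

Lemma coef_outside_span M w l1 l2 c :
  ~ in_span M w -> (forall u, In u (l1 ++ l2) -> M u) ->
  vadd X (vscal X (c w) w) (lc c (l1 ++ l2)) = vzero X -> c w = K0 b.
Proof.
intros Hn HlM Hz. apply NNPP; intro Hc. apply Hn.
exists (l1 ++ l2), (fun v => Kmul b (Kinv b (c w)) (Kmul b (Kopp1 b) (c v))).
split; [exact HlM|].
rewrite <- lc_scal, <- lc_scal, <- opp_scal.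
assert (E : vscal X (c w) w = vopp X (lc c (l1 ++ l2))).
{ apply sub_eq. rewrite opp_opp. exact Hz. }
rewrite <- E, vscal_assoc, Kinv_l, vscal_1; auto.
Qed.

Lemma indep_extend M w : indep M -> ~ in_span M w -> indep (fun v => M v \/ v = w).
Proof.
intros HM Hn l c Hnd Hl Hz v Hv.
destruct (classic (In w l)) as [Hw|Hw].
- destruct (in_split w l Hw) as [l1 [l2 E]]. subst l.
  pose proof (NoDup_remove_1 _ _ _ Hnd) as Hnd'.
  pose proof (NoDup_remove_2 _ _ _ Hnd) as Hnw.
  assert (HlM : forall u, In u (l1 ++ l2) -> M u).
  { intros u Hu. destruct (Hl u) as [h|h]; [|exact h|subst u; contradiction].
    apply in_or_app. apply in_app_or in Hu. destruct Hu; [left|right; right]; auto. }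
  assert (Hz2 : vadd X (vscal X (c w) w) (lc c (l1 ++ l2)) = vzero X).
  { rewrite lc_app in Hz |- *. unfold lc in Hz at 2; simpl in Hz. fold (lc c l2) in Hz.
    rewrite <- Hz, !vadd_assoc. f_equal. apply vadd_comm. }
  pose proof (coef_outside_span M w l1 l2 c Hn HlM Hz2) as Hcw.
  rewrite Hcw, scal_K0, add_0_l in Hz2.
  apply in_app_or in Hv. destruct Hv as [Hv|[<-|Hv]]; [| exact Hcw |];
    apply (HM _ _ Hnd' HlM Hz2); apply in_or_app; auto.
- assert (HlM : forall u, In u l -> M u).
  { intros u Hu. destruct (Hl u Hu) as [h|h]; [exact h|subst; contradiction]. }
  exact (HM l c Hnd HlM Hz v Hv).
Qed.

Lemma max_indep_span M :
  indep M -> (forall B, (forall x, M x -> B x) -> indep B -> forall x, B x -> M x) ->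
  forall w, in_span M w.
Proof.
intros HM Hmax w. apply NNPP; intro Hn.
assert (Mw : M w).
{ apply (Hmax _ (fun x h => or_introl h) (indep_extend M w HM Hn)). right; reflexivity. }
apply Hn. exists (w :: nil), (fun _ => K1 b). split.
- intros v [<-|[]]; exact Mw.
- unfold lc; simpl. rewrite vscal_1, vadd_0. reflexivity.
Qed.

Fixpoint lift_list (M : V b X -> Prop) (l : list (V b X)) : list {v | M v} :=
  match l with
  | nil => nil
  | v :: t => match excluded_middle_informative (M v) with
              | left H => exist _ v H :: lift_list M t
              | right _ => lift_list M t
              end
  end.

Lemma hamel_exists :
  exists (I : Type) (e : I -> V b X), hamel_basis (vadd X) (vscal X) (vzero X) (fun _ => True) e.
Proof.
destruct exists_max_indep as [M [HM Hmax]].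
exists {v | M v}, (@proj1_sig _ M). split; [|split].
- intros; exact I.
- intros l c Hnd Hz i Hi.
  pose (c' := fun v => match excluded_middle_informative (M v) with
                       | left H => c (exist _ v H) | right _ => K0 b end).
  assert (Hc' : forall j, c' (proj1_sig j) = c j).
  { intros [v H]; unfold c'; simpl. destruct (excluded_middle_informative (M v)) as [H'|H'].
    - do 2 f_equal. apply proof_irrelevance.
    - contradiction. }
  assert (E : lincomb (vadd X) (vscal X) (vzero X) c (@proj1_sig _ M) l =
              lc c' (map (@proj1_sig _ M) l)).
  { clear Hnd Hz Hi. induction l as [|j l IH]; [reflexivity|].
    simpl. rewrite IH, Hc'. reflexivity. }
  rewrite <- Hc'. apply (HM (map (@proj1_sig _ M) l) c').
  + apply Injective_map_NoDup; [|exact Hnd].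
    intros [x hx] [y hy]; simpl; intro; subst. f_equal; apply proof_irrelevance.
  + intros v Hv. apply in_map_iff in Hv. destruct Hv as [[x hx] [<- _]]. exact hx.
  + rewrite <- E; exact Hz.
  + apply in_map; exact Hi.
- intros w _. destruct (max_indep_span M HM Hmax w) as [l [c [Hl E]]].
  exists (lift_list M l), (fun j => c (proj1_sig j)). rewrite E. clear E.
  induction l as [|v l IH]; [reflexivity|]. simpl.
  destruct (excluded_middle_informative (M v)) as [H|H].
  + unfold lc in IH |- *; simpl. rewrite IH; [reflexivity|]. intros; apply Hl; right; auto.
  + exfalso; apply H, Hl; left; reflexivity.
Qed.

End HamelBasis.

Definition bounded_sums (g : nat -> R) : Prop := exists B, forall N, sum_f_R0 g N <= B.
Definition unbounded_sums (g : nat -> R) : Prop := forall M, exists N, M <= sum_f_R0 g N.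

Lemma sum_nonneg g N : (forall n, 0 <= g n) -> 0 <= sum_f_R0 g N.
Proof. intro H; induction N; simpl; [apply H|]. pose proof (H (S N)); lra. Qed.

Lemma sum_mono g M N : (forall n, 0 <= g n) -> (M <= N)%nat -> sum_f_R0 g M <= sum_f_R0 g N.
Proof. intros H HMN. induction HMN; [lra|]. simpl. pose proof (H (S m)); lra. Qed.

Lemma sum_ge_term g n N : (forall n, 0 <= g n) -> (n <= N)%nat -> g n <= sum_f_R0 g N.
Proof.
intros H Hn. apply Rle_trans with (sum_f_R0 g n); [|apply sum_mono; auto].
destruct n; simpl; [lra|]. pose proof (sum_nonneg g n H); lra.
Qed.

Lemma sum_le g h N : (forall n, g n <= h n) -> sum_f_R0 g N <= sum_f_R0 h N.
Proof. intro H; induction N; simpl; [apply H|]. pose proof (H (S N)); lra. Qed.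

Lemma sum_scal g c N : sum_f_R0 (fun n => c * g n) N = c * sum_f_R0 g N.
Proof. induction N; simpl; [ring|]. rewrite IHN; ring. Qed.

Lemma sum_zeros g a c : (a <= c)%nat -> (forall n, (a < n <= c)%nat -> g n = 0) ->
  sum_f_R0 g c = sum_f_R0 g a.
Proof.
intros H. induction H; intro Hz; [reflexivity|].
cbn [sum_f_R0]. rewrite IHle, (Hz (S m)); [ring|lia|]. intros; apply Hz; lia.
Qed.

Lemma sum_zeros0 g c : (forall n, (n <= c)%nat -> g n = 0) -> sum_f_R0 g c = 0.
Proof.
intro H. induction c; cbn [sum_f_R0]; [apply H; lia|].
rewrite IHc, H; [ring|lia|]. intros; apply H; lia.
Qed.

Lemma cv_of_bounded_sums g : (forall n, 0 <= g n) -> bounded_sums g ->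
  exists s, Un_cv (sum_f_R0 g) s.
Proof.
intros Hg [B HB]. destruct (growing_cv (sum_f_R0 g)) as [s Hs].
- intro n. cbn [sum_f_R0]. pose proof (Hg (S n)). lra.
- exists B. intros x [N ->]. apply HB.
- exists s; exact Hs.
Qed.

Lemma bounded_of_cv_sums g s : (forall n, 0 <= g n) -> Un_cv (sum_f_R0 g) s ->
  forall N, sum_f_R0 g N <= s.
Proof.
intros Hg Hs. apply growing_ineq; [|exact Hs].
intro n. cbn [sum_f_R0]. pose proof (Hg (S n)). lra.
Qed.

Lemma ln_le_sub1 y : 0 < y -> ln y <= y - 1.
Proof.
intro Hy. destruct (Rle_or_lt (ln y) (y - 1)) as [h|h]; [exact h|].
pose proof (exp_increasing _ _ h) as He. rewrite exp_ln in He by exact Hy.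
pose proof (exp_ineq1_le (y - 1)). lra.
Qed.

Lemma ln_pos_ge2 x : 2 <= x -> 0 < ln x.
Proof. intro; rewrite <- ln_1; apply ln_increasing; lra. Qed.

Lemma ln_div x y : 0 < x -> 0 < y -> ln (x / y) = ln x - ln y.
Proof.
intros; unfold Rdiv; rewrite ln_mult, ln_Rinv; [ring| |auto|apply Rinv_0_lt_compat]; auto.
Qed.

Lemma ln_small eps : 0 < eps -> exists M, 0 < M /\ forall L, M <= L -> ln L <= eps * L.
Proof.
intro He. set (a := 2 / eps). assert (Ha : 0 < a) by (unfold a; apply Rdiv_lt_0_compat; lra).
assert (Hea : eps * a = 2) by (unfold a; field; lra).
exists (a * a + 1). split; [nra|]. intros L HL.
assert (HL0 : 0 < L) by nra.
set (s := sqrt L). assert (Hs : s * s = L) by (apply sqrt_sqrt; lra).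
assert (Hs0 : 0 < s) by (apply sqrt_lt_R0; lra).
assert (E : ln L = ln s + ln s) by (rewrite <- Hs; apply ln_mult; lra).
pose proof (ln_le_sub1 s Hs0).
assert (Hsa : a <= s) by nra.
rewrite E, <- Hs. nra.
Qed.

Lemma large_ln M : exists K, forall k, (K <= k)%nat -> M <= ln (INR k + 3).
Proof.
destruct (INR_archimed 1 (exp M)) as [K HK]; [lra|]. exists K. intros k Hk.
apply le_INR in Hk. rewrite <- (ln_exp M). left. apply ln_increasing; [apply exp_pos|]. lra.
Qed.

Lemma ln_step x : 0 < x -> ln (x + 1) - ln x <= / x.
Proof.
intro Hx. rewrite <- ln_div by lra. pose proof (ln_le_sub1 ((x + 1) / x)) as H.
assert (0 < (x + 1) / x) by (apply Rdiv_lt_0_compat; lra).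
replace ((x + 1) / x - 1) with (/ x) in H by (field; lra). auto.
Qed.

(* Divergence of the harmonic series, by comparison with ln:
   nonnegative terms eventually above 1/(k+3) have unbounded sums. *)
Lemma harmonic_unbounded g K : (forall n, 0 <= g n) ->
  (forall k, (K <= k)%nat -> / (INR k + 3) <= g k) -> unbounded_sums g.
Proof.
intros Hg HK.
assert (Hlog : forall j, ln (INR (K + j) + 4) - ln (INR K + 3) <= sum_f_R0 g (K + j)).
{ intro j. induction j.
  - rewrite Nat.add_0_r. pose proof (sum_ge_term g K K Hg (le_n K)).
    pose proof (HK K (le_n K)). pose proof (pos_INR K).
    pose proof (ln_step (INR K + 3) ltac:(lra)).
    replace (INR K + 4) with (INR K + 3 + 1) by ring. lra.
  - rewrite Nat.add_succ_r. simpl sum_f_R0. pose proof (HK (S (K + j)) ltac:(lia)) as H.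
    rewrite S_INR in *. pose proof (pos_INR (K + j)).
    pose proof (ln_step (INR (K + j) + 4) ltac:(lra)).
    replace (INR (K + j) + 1 + 3) with (INR (K + j) + 4) in H by ring.
    replace (INR (K + j) + 1 + 4) with (INR (K + j) + 4 + 1) by ring. lra. }
intro M. destruct (INR_archimed 1 (exp (M + ln (INR K + 3)))) as [N HN]; [lra|].
exists (K + N)%nat. eapply Rle_trans; [|apply Hlog].
assert (M + ln (INR K + 3) <= ln (INR (K + N) + 4)).
{ rewrite <- (ln_exp (M + ln (INR K + 3))). left. apply ln_increasing; [apply exp_pos|].
  rewrite plus_INR. pose proof (pos_INR K). lra. }
lra.
Qed.

Lemma rpow_nonneg t p : 0 <= rpow t p.
Proof. unfold rpow; destruct Rlt_dec; [left; apply exp_pos|lra]. Qed.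

Lemma rpow_pos t p : 0 < t -> rpow t p = Rpower t p.
Proof. unfold rpow; destruct Rlt_dec; [reflexivity|contradiction]. Qed.

Lemma rpow_0 p : rpow 0 p = 0.
Proof. unfold rpow; destruct Rlt_dec; [lra|reflexivity]. Qed.

Lemma Rpower_pos e p : 0 < Rpower e p.
Proof. unfold Rpower; apply exp_pos. Qed.

Lemma rpow_le s t p : 0 < p -> 0 <= s <= t -> rpow s p <= rpow t p.
Proof.
intros Hp [H1 H2]. destruct (Req_dec s 0) as [E|E].
- subst; rewrite rpow_0; apply rpow_nonneg.
- rewrite !rpow_pos by lra. apply Rle_Rpower_l; lra.
Qed.

Lemma rpow_mult s t p : 0 <= s -> 0 <= t -> rpow (s * t) p = rpow s p * rpow t p.
Proof.
intros Hs Ht. destruct (Req_dec s 0) as [E|E]; [subst; rewrite Rmult_0_l, !rpow_0; ring|].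
destruct (Req_dec t 0) as [F|F]; [subst; rewrite Rmult_0_r, !rpow_0; ring|].
rewrite !rpow_pos by nra. symmetry; apply Rpower_mult_distr; lra.
Qed.

Lemma rpow_le_inv d e p : 0 < p -> 0 < e -> 0 <= d -> rpow d p <= Rpower e p -> d <= e.
Proof.
intros Hp He Hd H. destruct (Rle_or_lt d e) as [h|h]; [exact h|].
rewrite rpow_pos in H by lra. pose proof (Rlt_Rpower_l e d p Hp ltac:(lra)). lra.
Qed.

Lemma inv_as_exp x : 0 < x -> / x = exp (- ln x).
Proof. intro; rewrite exp_Ropp, exp_ln; auto. Qed.

Lemma exp_le a c : a <= c -> exp a <= exp c.
Proof. intros [h|h]; [left; apply exp_increasing; auto|subst; lra]. Qed.

Definition lp_base (k : nat) : R := / ((INR k + 3) * (ln (INR k + 3) * ln (INR k + 3))).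

Lemma lp_base_pos k : 0 < lp_base k.
Proof.
unfold lp_base. pose proof (pos_INR k). pose proof (ln_pos_ge2 (INR k + 3) ltac:(lra)).
apply Rinv_0_lt_compat. apply Rmult_lt_0_compat; [lra|nra].
Qed.

(* The telescoping bound 1/(x ln² x) <= 1/ln(x-1) - 1/ln x for x = k + 3. *)
Lemma lp_base_tele k : lp_base k <= / ln (INR k + 2) - / ln (INR k + 3).
Proof.
unfold lp_base. set (x := INR k + 2). replace (INR k + 3) with (x + 1) by (unfold x; ring).
assert (Hx : 2 <= x) by (unfold x; pose proof (pos_INR k); lra).
set (a := ln x). set (c := ln (x + 1)).
assert (Ha : 0 < a) by (apply ln_pos_ge2; lra).
assert (Hac : a <= c) by (left; apply ln_increasing; lra).
assert (Hd : / (x + 1) <= c - a).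
{ pose proof (ln_le_sub1 (x / (x + 1)) ltac:(apply Rdiv_lt_0_compat; lra)) as H.
  rewrite ln_div in H by lra. replace (x / (x + 1) - 1) with (- / (x + 1)) in H by (field; lra).
  fold a c in H. lra. }
replace (/ a - / c) with ((c - a) * / (a * c)) by (field; lra).
rewrite Rinv_mult. apply Rmult_le_compat.
- left; apply Rinv_0_lt_compat; lra.
- left; apply Rinv_0_lt_compat; nra.
- exact Hd.
- apply Rinv_le_contravar; nra.
Qed.

Lemma lp_base_summable : bounded_sums lp_base.
Proof.
exists (/ ln 2).
assert (H : forall N, sum_f_R0 lp_base N <= / ln 2 - / ln (INR N + 3)).
{ induction N.
  - pose proof (lp_base_tele 0) as H. simpl in *. replace (0 + 2) with 2 in H by ring. exact H.
  - cbn [sum_f_R0]. pose proof (lp_base_tele (S N)) as H. rewrite S_INR in *.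
    replace (INR N + 1 + 2) with (INR N + 3) in H by ring. lra. }
intro N. specialize (H N). pose proof (pos_INR N).
pose proof (ln_pos_ge2 (INR N + 3) ltac:(lra)).
assert (0 < / ln (INR N + 3)) by (apply Rinv_0_lt_compat; lra). lra.
Qed.

(* For r < 1, lp_base k ^ r eventually dominates 1/(k+3). *)
Lemma lp_base_pow_unbounded r : 0 < r < 1 -> unbounded_sums (fun k => Rpower (lp_base k) r).
Proof.
intro Hr. destruct (ln_small ((1 - r) / (2 * r))) as [M [HM HMl]].
{ apply Rdiv_lt_0_compat; lra. }
destruct (large_ln M) as [K HK].
apply (harmonic_unbounded _ K). { intro; left; apply Rpower_pos. }
intros k Hk. specialize (HK k Hk). specialize (HMl _ HK).
pose proof (pos_INR k). set (x := INR k + 3) in *. set (L := ln x) in *.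
assert (HL : 0 < L) by (apply ln_pos_ge2; unfold x; lra).
rewrite inv_as_exp by (unfold x; lra). unfold Rpower.
assert (E : ln (lp_base k) = - (L + (ln L + ln L))).
{ unfold lp_base. fold x L. rewrite ln_Rinv by (unfold x; nra).
  rewrite ln_mult, ln_mult by (unfold x; nra). reflexivity. }
rewrite E. apply exp_le.
assert (H2 : (1 - r) / (2 * r) * L * (2 * r) = (1 - r) * L) by (field; lra).
assert (H3 : ln L * (2 * r) <= (1 - r) / (2 * r) * L * (2 * r))
  by (apply Rmult_le_compat_r; lra).
fold L. rewrite H2 in H3. lra.
Qed.

Definition lp_weight (p : R) (k : nat) : R := Rpower (lp_base k) (/ p).

Lemma lp_weight_pos p k : 0 < lp_weight p k.
Proof. apply Rpower_pos. Qed.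

Lemma lp_weight_pow p q k : rpow (lp_weight p k) q = Rpower (lp_base k) (/ p * q).
Proof. rewrite rpow_pos by apply lp_weight_pos. apply Rpower_mult. Qed.

Lemma lp_weight_summable p : 0 < p -> bounded_sums (fun k => rpow (lp_weight p k) p).
Proof.
intro Hp. destruct lp_base_summable as [B HB]. exists B. intro N.
erewrite sum_eq; [apply HB|]. intros k _.
rewrite lp_weight_pow, Rinv_l, Rpower_1 by (try apply lp_base_pos; lra). reflexivity.
Qed.

Lemma lp_weight_unbounded p q : 0 < q < p -> unbounded_sums (fun k => rpow (lp_weight p k) q).
Proof.
intros Hq M.
assert (Hr : 0 < / p * q < 1).
{ split.
  - apply Rmult_lt_0_compat; [apply Rinv_0_lt_compat|]; lra.
  - apply Rmult_lt_reg_l with p; [lra|]. rewrite <- Rmult_assoc, Rinv_r by lra. lra. }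
destruct (lp_base_pow_unbounded _ Hr M) as [N HN].
exists N. erewrite sum_eq; [exact HN|]. intros k _. apply lp_weight_pow.
Qed.

Definition c0_weight (k : nat) : R := / ln (INR k + 3).

Lemma c0_weight_pos k : 0 < c0_weight k.
Proof. unfold c0_weight; pose proof (pos_INR k); apply Rinv_0_lt_compat, ln_pos_ge2; lra. Qed.

Lemma c0_weight_vanishes eps : 0 < eps -> exists K, forall k, (K <= k)%nat -> c0_weight k < eps.
Proof.
intro He. destruct (large_ln (/ eps + 1)) as [K HK]. exists K. intros k Hk.
specialize (HK k Hk). unfold c0_weight. pose proof (Rinv_0_lt_compat _ He).
rewrite <- (Rinv_inv eps). apply Rinv_lt_contravar; nra.
Qed.

Lemma c0_weight_unbounded q : 0 < q -> unbounded_sums (fun k => rpow (c0_weight k) q).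
Proof.
intro Hq. destruct (ln_small (/ q)) as [M [HM HMl]]. { apply Rinv_0_lt_compat; lra. }
destruct (large_ln M) as [K HK].
apply (harmonic_unbounded _ K). { intro; apply rpow_nonneg. }
intros k Hk. specialize (HK k Hk). specialize (HMl _ HK).
rewrite rpow_pos by apply c0_weight_pos.
pose proof (pos_INR k). set (x := INR k + 3) in *. set (L := ln x) in *.
assert (HL : 0 < L) by (apply ln_pos_ge2; unfold x; lra).
rewrite inv_as_exp by (unfold x; lra). unfold Rpower, c0_weight. fold x L.
rewrite ln_Rinv by lra. apply exp_le.
assert (H3 : ln L * q <= / q * L * q) by (apply Rmult_le_compat_r; lra).
replace (/ q * L * q) with L in H3 by (field; lra). fold L. nra.
Qed.

Record UnifEmbedding {b} (X : Banach b) (Xs : nat -> Banach b) := {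
  nk : nat -> nat;
  delta : R;
  Rk : forall k, V b X -> V b (Xs (nk k));
  nk_inc : forall k, (nk k < nk (S k))%nat;
  delta_pos : 0 < delta;
  Rk_lin : forall k, is_linear X (Xs (nk k)) (Rk k);
  Rk_ub : forall k x, vnorm (Xs (nk k)) (Rk k x) <= delta * vnorm X x;
  Rk_lb : forall k x, vnorm X x <= delta * vnorm (Xs (nk k)) (Rk k x) }.
Arguments nk {b X Xs}. Arguments delta {b X Xs}. Arguments Rk {b X Xs}.
Arguments nk_inc {b X Xs}. Arguments delta_pos {b X Xs}. Arguments Rk_lin {b X Xs}.
Arguments Rk_ub {b X Xs}. Arguments Rk_lb {b X Xs}.

Lemma unif_embedding_exists {b} (X : Banach b) (Xs : nat -> Banach b) :
  (exists nk : nat -> nat,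
      (forall k, (nk k < nk (S k))%nat) /\ unif_isomorphs X (fun k => Xs (nk k))) ->
  inhabited (UnifEmbedding X Xs).
Proof.
intros [n [Hinc [d [Hd HR]]]].
pose (R := fun k => proj1_sig (constructive_indefinite_description _ (HR k))).
pose (HRk := fun k => proj2_sig (constructive_indefinite_description _ (HR k))).
exact (inhabits {| nk := n; delta := d; Rk := R; nk_inc := Hinc; delta_pos := Hd;
                   Rk_lin := fun k => proj1 (HRk k);
                   Rk_ub := fun k => proj1 (proj2 (HRk k));
                   Rk_lb := fun k => proj2 (proj2 (HRk k)) |}).
Qed.

Definition transport {b} (Xs : nat -> Banach b) {m n : nat} (H : m = n)
  (v : V b (Xs m)) : V b (Xs n) :=
  eq_rect m (fun j => V b (Xs j)) v n H.

Lemma transport_add {b} Xs m n (H : m = n) x y :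
  @transport b Xs m n H (vadd (Xs m) x y) = vadd (Xs n) (transport Xs H x) (transport Xs H y).
Proof. destruct H; reflexivity. Qed.

Lemma transport_scal {b} Xs m n (H : m = n) a x :
  @transport b Xs m n H (vscal (Xs m) a x) = vscal (Xs n) a (transport Xs H x).
Proof. destruct H; reflexivity. Qed.

Lemma transport_norm {b} Xs m n (H : m = n) x :
  vnorm (Xs n) (@transport b Xs m n H x) = vnorm (Xs m) x.
Proof. destruct H; reflexivity. Qed.

Section Diagonal.
Context {b : bool} {X : Banach b} {Xs : nat -> Banach b} (D : UnifEmbedding X Xs).

Lemma nk_mono j k : (j < k)%nat -> (nk D j < nk D k)%nat.
Proof. intro H. induction H; [apply nk_inc|]. pose proof (nk_inc D m). lia. Qed.

Lemma nk_le j k : (j <= k)%nat -> (nk D j <= nk D k)%nat.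
Proof.
intro H. destruct (Nat.eq_dec j k); [subst; lia|]. pose proof (nk_mono j k ltac:(lia)); lia.
Qed.

Lemma nk_inj j k : nk D j = nk D k -> j = k.
Proof.
intro E. destruct (Nat.lt_trichotomy j k) as [h|[h|h]]; auto;
  pose proof (nk_mono _ _ h); lia.
Qed.

Lemma nk_ge k : (k <= nk D k)%nat.
Proof. induction k; [lia|]. pose proof (nk_inc D k). lia. Qed.

Lemma sum_over_subsequence g :
  (forall n, (~ exists k, nk D k = n) -> g n = 0) ->
  forall K, sum_f_R0 g (nk D K) = sum_f_R0 (fun k => g (nk D k)) K.
Proof.
intros Hg K. induction K.
- cbn [sum_f_R0]. destruct (nk D 0) as [|m] eqn:E; [reflexivity|].
  cbn [sum_f_R0]. rewrite sum_zeros0; [ring|]. intros n Hn. apply Hg. intros [j Hj].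
  pose proof (nk_le 0 j ltac:(lia)). lia.
- cbn [sum_f_R0]. rewrite <- IHK. pose proof (nk_inc D K).
  destruct (nk D (S K)) as [|m] eqn:E; [lia|].
  cbn [sum_f_R0]. rewrite (sum_zeros g (nk D K) m); [reflexivity|lia|].
  intros n Hn. apply Hg. intros [j Hj]. subst n.
  destruct (Compare_dec.le_lt_dec j K) as [h|h].
  + pose proof (nk_le j K h). lia.
  + pose proof (nk_le (S K) j h). lia.
Qed.

Variable w : nat -> R.

Definition diag (u : V b X) : Seq Xs :=
  fun n => match excluded_middle_informative (exists k, nk D k = n) with
  | left H => let s := constructive_indefinite_description _ H in
      transport Xs (proj2_sig s)
        (vscal (Xs (nk D (proj1_sig s))) (Kr b (w (proj1_sig s))) (Rk D (proj1_sig s) u))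
  | right _ => vzero (Xs n)
  end.

Lemma diag_cases n :
  (exists k (H : nk D k = n), forall u,
      diag u n = transport Xs H (vscal (Xs (nk D k)) (Kr b (w k)) (Rk D k u))) \/
  ((~ exists k, nk D k = n) /\ forall u, diag u n = vzero (Xs n)).
Proof.
unfold diag. destruct (excluded_middle_informative (exists k, nk D k = n)) as [H|H].
- left. destruct (constructive_indefinite_description _ H) as [k Hk]. simpl.
  exists k, Hk. reflexivity.
- right. split; [exact H|reflexivity].
Qed.

Lemma diag_add u v n : diag (vadd X u v) n = vadd (Xs n) (diag u n) (diag v n).
Proof.
destruct (diag_cases n) as [[k [H E]]|[_ E]]; rewrite !E.
- rewrite <- transport_add, <- vscal_distr_v. destruct (Rk_lin D k) as [Ha _].
  rewrite Ha. reflexivity.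
- rewrite vadd_0. reflexivity.
Qed.

Lemma diag_scal a u n : diag (vscal X a u) n = vscal (Xs n) a (diag u n).
Proof.
destruct (diag_cases n) as [[k [H E]]|[_ E]]; rewrite !E.
- rewrite <- transport_scal. destruct (Rk_lin D k) as [_ Hs].
  rewrite Hs, !vscal_assoc, Kmul_comm. reflexivity.
- rewrite scal_0. reflexivity.
Qed.

Lemma diag_sub u v n :
  diag (vadd X u (vopp X v)) n = vadd (Xs n) (diag u n) (vopp (Xs n) (diag v n)).
Proof. rewrite diag_add, opp_scal, diag_scal, <- opp_scal. reflexivity. Qed.

Lemma diag_norm_nk k u :
  vnorm (Xs (nk D k)) (diag u (nk D k)) = Rabs (w k) * vnorm (Xs (nk D k)) (Rk D k u).
Proof.
destruct (diag_cases (nk D k)) as [[k' [H E]]|[Hn _]].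
- rewrite E, transport_norm, vnorm_scal, Kabs_Kr.
  pose proof (nk_inj _ _ H). subst k'. reflexivity.
- exfalso; apply Hn; exists k; reflexivity.
Qed.

Lemma diag_norm_off n u : (~ exists k, nk D k = n) -> vnorm (Xs n) (diag u n) = 0.
Proof.
intro Hn. destruct (diag_cases n) as [[k' [H E]]|[_ E]].
- exfalso; apply Hn; exists k'; exact H.
- rewrite E; apply norm_0.
Qed.

Lemma diag_coord_bounded n :
  exists C, 0 <= C /\ forall u, vnorm (Xs n) (diag u n) <= C * vnorm X u.
Proof.
destruct (diag_cases n) as [[k [H _]]|[Hoff _]].
- subst n. exists (Rabs (w k) * delta D). split.
  + apply Rmult_le_pos; [apply Rabs_pos|left; apply delta_pos].
  + intro u. rewrite diag_norm_nk, Rmult_assoc.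
    apply Rmult_le_compat_l; [apply Rabs_pos|apply Rk_ub].
- exists 0. split; [lra|]. intro u. rewrite diag_norm_off by exact Hoff. lra.
Qed.

Lemma diag_coord_continuous n u l :
  converges X u l -> converges (Xs n) (fun k => diag (u k) n) (diag l n).
Proof.
intros Hl eps He. destruct (diag_coord_bounded n) as [C [HC HCb]].
destruct (Hl (eps / (C + 1))) as [K HK]; [apply Rdiv_lt_0_compat; lra|].
exists K. intros k Hk. rewrite <- diag_sub.
eapply Rle_trans; [apply HCb|].
apply Rle_trans with ((C + 1) * (eps / (C + 1))); [|right; field; lra].
pose proof (HK k Hk). pose proof (vnorm_nonneg _ X (vadd X (u k) (vopp X l))). nra.
Qed.

Hypothesis w0_pos : 0 < w 0%nat.

Lemma diag_norm_control u :
  vnorm X u <= delta D / w 0%nat * vnorm (Xs (nk D 0)) (diag u (nk D 0)).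
Proof.
rewrite diag_norm_nk, Rabs_pos_eq by lra.
replace (delta D / w 0%nat * (w 0%nat * vnorm (Xs (nk D 0)) (Rk D 0 u)))
  with (delta D * vnorm (Xs (nk D 0)) (Rk D 0 u)) by (field; lra).
apply Rk_lb.
Qed.

Lemma diag_inj u : diag u = seq0 Xs -> u = vzero X.
Proof.
intro E. apply vnorm_eq0. pose proof (diag_norm_control u) as H.
rewrite E in H. unfold seq0 in H. rewrite norm_0, Rmult_0_r in H.
pose proof (vnorm_nonneg _ X u). lra.
Qed.

Lemma diag_preimage_cauchy (u : nat -> V b X) z :
  converges (Xs (nk D 0)) (fun k => diag (u k) (nk D 0)) z ->
  forall eps, 0 < eps -> exists N, forall m n, (N <= m)%nat -> (N <= n)%nat ->
    vnorm X (vadd X (u m) (vopp X (u n))) < eps.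
Proof.
intros Hz eps He. set (C := delta D / w 0%nat).
assert (HC : 0 < C) by (apply Rdiv_lt_0_compat; [apply delta_pos|exact w0_pos]).
destruct (Hz (eps / (4 * C))) as [K HK]; [apply Rdiv_lt_0_compat; lra|].
exists K. intros m n Hm Hn.
pose proof (HK m Hm) as H1. pose proof (HK n Hn) as H2. cbv beta in H1, H2.
rewrite dist_sym in H2.
pose proof (dist_tri _ (diag (u m) (nk D 0)) z (diag (u n) (nk D 0))) as H3.
pose proof (diag_norm_control (vadd X (u m) (vopp X (u n)))) as H4.
fold C in H4. rewrite diag_sub in H4.
assert (H5 : C * (eps / (4 * C) + eps / (4 * C)) = eps / 2) by (field; lra).
assert (H6 : C * vnorm _ (vadd _ (diag (u m) (nk D 0)) (vopp _ (diag (u n) (nk D 0))))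
             <= C * (eps / (4 * C) + eps / (4 * C))) by (apply Rmult_le_compat_l; lra).
lra.
Qed.

Definition diag_range : Seq Xs -> Prop := fun z => exists u, z = diag u.

Lemma diag_range_closed (y : nat -> Seq Xs) x :
  (forall k, diag_range (y k)) -> (forall n, converges (Xs n) (fun k => y k n) (x n)) ->
  diag_range x.
Proof.
intros Hy Hconv. destruct (choice _ Hy) as [u Hu].
assert (Hx : forall n, converges (Xs n) (fun k => diag (u k) n) (x n)).
{ intros n eps He. destruct (Hconv n eps He) as [K HK]. exists K. intros k Hk.
  rewrite <- Hu. apply HK, Hk. }
destruct (complete_converges X u (diag_preimage_cauchy u _ (Hx (nk D 0)))) as [l Hl].
exists l. apply functional_extensionality_dep. intro n.
apply (limit_unique _ _ _ _ (Hx n)). apply diag_coord_continuous, Hl.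
Qed.

End Diagonal.

Section DiagonalSpaceable.
Context {b : bool} {X : Banach b} {Xs : nat -> Banach b} (D : UnifEmbedding X Xs).
Variable w : nat -> R.
Hypothesis w_pos : forall k, 0 < w k.

Definition diag_terms (q : R) (u : V b X) (n : nat) : R :=
  rpow (vnorm (Xs n) (diag D w u n)) q.

Lemma diag_terms_sum q u K :
  sum_f_R0 (diag_terms q u) (nk D K) =
  sum_f_R0 (fun k => rpow (w k * vnorm (Xs (nk D k)) (Rk D k u)) q) K.
Proof.
rewrite sum_over_subsequence.
- apply sum_eq. intros k _. unfold diag_terms.
  rewrite diag_norm_nk, Rabs_pos_eq by (left; apply w_pos). reflexivity.
- intros n Hn. unfold diag_terms. rewrite diag_norm_off by exact Hn. apply rpow_0.
Qed.

Lemma diag_term_upper q u k : 0 < q ->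
  rpow (w k * vnorm (Xs (nk D k)) (Rk D k u)) q <= rpow (delta D * vnorm X u) q * rpow (w k) q.
Proof.
intro Hq. pose proof (w_pos k). pose proof (delta_pos D). pose proof (vnorm_nonneg _ X u).
rewrite (Rmult_comm (rpow (delta D * vnorm X u) q)), <- rpow_mult by nra.
apply rpow_le; [exact Hq|]. split.
- apply Rmult_le_pos; [lra|apply vnorm_nonneg].
- apply Rmult_le_compat_l; [lra|apply Rk_ub].
Qed.

Lemma diag_term_lower q u k : 0 < q ->
  rpow (vnorm X u / delta D) q * rpow (w k) q <= rpow (w k * vnorm (Xs (nk D k)) (Rk D k u)) q.
Proof.
intro Hq. pose proof (w_pos k). pose proof (delta_pos D). pose proof (vnorm_nonneg _ X u).
assert (0 <= vnorm X u / delta D) by (apply Rmult_le_pos; [lra|left; apply Rinv_0_lt_compat; lra]).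
rewrite (Rmult_comm (rpow (vnorm X u / delta D) q)), <- rpow_mult by lra.
apply rpow_le; [exact Hq|]. split; [nra|].
apply Rmult_le_compat_l; [lra|].
apply Rmult_le_reg_l with (delta D); [lra|].
replace (delta D * (vnorm X u / delta D)) with (vnorm X u) by (field; lra). apply Rk_lb.
Qed.

Lemma diag_in_lp p u : 0 < p -> bounded_sums (fun k => rpow (w k) p) -> in_lp Xs p (diag D w u).
Proof.
intros Hp [B HB]. apply cv_of_bounded_sums; [intro; apply rpow_nonneg|].
exists (rpow (delta D * vnorm X u) p * B). intro N.
apply Rle_trans with (sum_f_R0 (diag_terms p u) (nk D N)).
{ apply sum_mono; [intro; apply rpow_nonneg|apply nk_ge]. }
rewrite diag_terms_sum. apply Rle_trans with
  (sum_f_R0 (fun k => rpow (delta D * vnorm X u) p * rpow (w k) p) N).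
- apply sum_le. intro k. apply diag_term_upper, Hp.
- rewrite sum_scal. apply Rmult_le_compat_l; [apply rpow_nonneg|apply HB].
Qed.

Lemma diag_not_in_lp q u : 0 < q -> unbounded_sums (fun k => rpow (w k) q) ->
  u <> vzero X -> ~ in_lp Xs q (diag D w u).
Proof.
intros Hq Hun Hu [s Hs].
pose proof (bounded_of_cv_sums _ s (fun n => rpow_nonneg _ q) Hs) as Hle.
assert (Hnu : 0 < vnorm X u).
{ destruct (vnorm_nonneg _ X u) as [h|h]; [exact h|]. exfalso; apply Hu, vnorm_eq0; auto. }
pose proof (delta_pos D) as Hd.
set (c := rpow (vnorm X u / delta D) q).
assert (Hc : 0 < c).
{ unfold c. rewrite rpow_pos by (apply Rdiv_lt_0_compat; lra). apply Rpower_pos. }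
destruct (Hun ((s + 1) / c)) as [K HK].
specialize (Hle (nk D K)). unfold diag_terms in Hle. fold (diag_terms q u) in Hle.
rewrite diag_terms_sum in Hle.
assert (H2 : c * sum_f_R0 (fun k => rpow (w k) q) K <=
             sum_f_R0 (fun k => rpow (w k * vnorm (Xs (nk D k)) (Rk D k u)) q) K).
{ rewrite <- sum_scal. apply sum_le. intro k. apply diag_term_lower, Hq. }
assert (H3 : c * ((s + 1) / c) = s + 1) by (field; lra).
assert (H4 : c * ((s + 1) / c) <= c * sum_f_R0 (fun k => rpow (w k) q) K)
  by (apply Rmult_le_compat_l; lra).
lra.
Qed.

Lemma diag_in_c0 u :
  (forall eps, 0 < eps -> exists K, forall k, (K <= k)%nat -> w k < eps) ->
  in_c0 Xs (diag D w u).
Proof.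
intros Hsm eps He. pose proof (delta_pos D). pose proof (vnorm_nonneg _ X u).
set (C := delta D * vnorm X u + 1).
assert (HC : 0 < C) by (unfold C; nra).
destruct (Hsm (eps / C)) as [K HK]; [apply Rdiv_lt_0_compat; lra|].
exists (nk D K). intros n Hn. unfold R_dist. rewrite Rminus_0_r.
rewrite Rabs_pos_eq by apply vnorm_nonneg.
destruct (diag_cases D w n) as [[k [Hkn _]]|[Hoff _]].
- subst n. rewrite diag_norm_nk, Rabs_pos_eq by (left; apply w_pos).
  assert (Hk : (K <= k)%nat).
  { destruct (Compare_dec.le_lt_dec K k) as [h|h]; [exact h|].
    pose proof (nk_mono D _ _ h). lia. }
  specialize (HK k Hk). pose proof (Rk_ub D k u). pose proof (w_pos k).
  assert (eps / C * C = eps) by (field; lra).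
  assert (w k * vnorm _ (Rk D k u) <= w k * (delta D * vnorm X u))
    by (apply Rmult_le_compat_l; lra).
  assert (w k * (delta D * vnorm X u) <= w k * C) by (apply Rmult_le_compat_l; unfold C; lra).
  assert (w k * C < eps / C * C) by (apply Rmult_lt_compat_r; lra).
  lra.
- rewrite diag_norm_off by exact Hoff. exact He.
Qed.

Lemma diag_seq_add u v : seq_add Xs (diag D w u) (diag D w v) = diag D w (vadd X u v).
Proof.
apply functional_extensionality_dep; intro n; unfold seq_add; rewrite diag_add; reflexivity.
Qed.

Lemma diag_seq_scal a u : seq_scal Xs a (diag D w u) = diag D w (vscal X a u).
Proof.
apply functional_extensionality_dep; intro n; unfold seq_scal; rewrite diag_scal; reflexivity.
Qed.

Lemma diag_seq0 : seq0 Xs = diag D w (vzero X).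
Proof.
apply functional_extensionality_dep; intro n. unfold seq0.
rewrite <- (scal_K0 X (vzero X)), diag_scal, scal_K0. reflexivity.
Qed.

Lemma diag_range_subspace : is_subspace Xs (diag_range D w).
Proof.
split; [|split].
- exists (vzero X); apply diag_seq0.
- intros x y [u ->] [v ->]. exists (vadd X u v); apply diag_seq_add.
- intros a x [u ->]. exists (vscal X a u); apply diag_seq_scal.
Qed.

Lemma diag_lincomb {I} (c : I -> Kt b) e l :
  lincomb (seq_add Xs) (seq_scal Xs) (seq0 Xs) c (fun i => diag D w (e i)) l =
  diag D w (lincomb (vadd X) (vscal X) (vzero X) c e l).
Proof.
induction l as [|i l IH]; simpl.
- apply diag_seq0.
- rewrite IH, diag_seq_scal, diag_seq_add. reflexivity.
Qed.

(* The injective linear map T_w sends a Hamel basis of X to one of its range. *)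
Lemma diag_range_dim : same_dim X Xs (diag_range D w).
Proof.
destruct (hamel_exists X) as [I [e [He1 [He2 He3]]]].
exists I, e, (fun i => diag D w (e i)). split; [split; [exact He1|split; [exact He2|exact He3]]|].
split; [|split].
- intro i; exists (e i); reflexivity.
- intros l c Hnd Hz. rewrite diag_lincomb in Hz. apply (diag_inj D w (w_pos 0)) in Hz.
  exact (He2 l c Hnd Hz).
- intros z [u ->]. destruct (He3 u Logic.I) as [l [c ->]]. exists l, c.
  symmetry; apply diag_lincomb.
Qed.

Lemma diag_spaceable E (closed : (Seq Xs -> Prop) -> Prop) A :
  (forall u, E (diag D w u)) -> closed (diag_range D w) ->
  (forall u, u <> vzero X -> A (diag D w u)) ->
  spaceable X Xs E closed A.
Proof.
intros HE Hcl HA. exists (diag_range D w).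
split; [apply diag_range_subspace|split; [|split; [exact Hcl|split; [|apply diag_range_dim]]]].
- intros x [u ->]. apply HE.
- intros x [u ->]. destruct (classic (u = vzero X)) as [->|Hu].
  + right. symmetry; apply diag_seq0.
  + left. apply HA, Hu.
Qed.

End DiagonalSpaceable.

Lemma lp_conv_coordwise {b} (Xs : nat -> Banach b) p (y : nat -> Seq Xs) x : 0 < p ->
  (forall eps, 0 < eps -> exists K, forall k, (K <= k)%nat -> forall N,
        sum_f_R0 (fun n => rpow (seq_dnorm Xs (y k) x n) p) N <= eps) ->
  forall n, converges (Xs n) (fun k => y k n) (x n).
Proof.
intros Hp H n eps He. destruct (H (Rpower eps p)) as [K HK]; [apply Rpower_pos|].
exists K. intros k Hk. specialize (HK k Hk n).
apply (rpow_le_inv _ _ p Hp He); [apply vnorm_nonneg|].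
eapply Rle_trans; [|exact HK].
apply (sum_ge_term (fun n => rpow (seq_dnorm Xs (y k) x n) p)); [intro; apply rpow_nonneg|lia].
Qed.

Lemma closed_lp_of_coordwise {b} (Xs : nat -> Banach b) p (S : Seq Xs -> Prop) : 0 < p ->
  (forall y x, (forall k, S (y k)) -> (forall n, converges (Xs n) (fun k => y k n) (x n)) -> S x) ->
  closed_lp Xs p S.
Proof.
intros Hp HS y x Hy _ Hc. apply (HS y x Hy). apply (lp_conv_coordwise Xs p y x Hp Hc).
Qed.

Lemma closed_c0_of_coordwise {b} (Xs : nat -> Banach b) (S : Seq Xs -> Prop) :
  (forall y x, (forall k, S (y k)) -> (forall n, converges (Xs n) (fun k => y k n) (x n)) -> S x) ->
  closed_c0 Xs S.
Proof.
intros HS y x Hy _ Hc. apply (HS y x Hy).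
intros n eps He. destruct (Hc eps He) as [K HK]. exists K; intros k Hk; apply HK, Hk.
Qed.

Lemma spaceable_lp {b} {X : Banach b} {Xs} (D : UnifEmbedding X Xs) w p :
  0 < p -> (forall k, 0 < w k) -> bounded_sums (fun k => rpow (w k) p) ->
  (forall q, 0 < q < p -> unbounded_sums (fun k => rpow (w k) q)) ->
  spaceable X Xs (in_lp Xs p) (closed_lp Xs p)
    (fun x => in_lp Xs p x /\ ~ (exists q, 0 < q < p /\ in_lp Xs q x)).
Proof.
intros Hp Hw Hsum Hun. apply (diag_spaceable D w Hw).
- intro u. apply diag_in_lp; auto.
- apply closed_lp_of_coordwise; [exact Hp|]. apply diag_range_closed, Hw.
- intros u Hu. split; [apply diag_in_lp; auto|]. intros [q [Hq Hin]].
  apply (diag_not_in_lp D w Hw q u); auto; lra.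
Qed.

Lemma spaceable_c0 {b} {X : Banach b} {Xs} (D : UnifEmbedding X Xs) w :
  (forall k, 0 < w k) ->
  (forall eps, 0 < eps -> exists K, forall k, (K <= k)%nat -> w k < eps) ->
  (forall q, 0 < q -> unbounded_sums (fun k => rpow (w k) q)) ->
  spaceable X Xs (in_c0 Xs) (closed_c0 Xs)
    (fun x => in_c0 Xs x /\ ~ (exists p, 0 < p /\ in_lp Xs p x)).
Proof.
intros Hw Hsm Hun. apply (diag_spaceable D w Hw).
- intro u. apply diag_in_c0; auto.
- apply closed_c0_of_coordwise. apply diag_range_closed, Hw.
- intros u Hu. split; [apply diag_in_c0; auto|]. intros [q [Hq Hin]].
  apply (diag_not_in_lp D w Hw q u); auto.
Qed.

Theorem theorem3p2 (b : bool) (X : Banach b) (Xs : nat -> Banach b)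
  (HX : infinite_dim X)
  (Hsub : exists nk : nat -> nat,
      (forall k, (nk k < nk (S k))%nat) /\ unif_isomorphs X (fun k => Xs (nk k))) :
  (forall p : R, 0 < p ->
     spaceable X Xs (in_lp Xs p) (closed_lp Xs p)
       (fun x => in_lp Xs p x /\ ~ (exists q, 0 < q < p /\ in_lp Xs q x))) /\
  spaceable X Xs (in_c0 Xs) (closed_c0 Xs)
    (fun x => in_c0 Xs x /\ ~ (exists p, 0 < p /\ in_lp Xs p x)).
Proof.
destruct (unif_embedding_exists X Xs Hsub) as [D]. split.
- intros p Hp. apply (spaceable_lp D (lp_weight p) p Hp).
  + apply lp_weight_pos.
  + apply lp_weight_summable, Hp.
  + intros q Hq. apply lp_weight_unbounded, Hq.
- apply (spaceable_c0 D c0_weight).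
  + apply c0_weight_pos.
  + apply c0_weight_vanishes.
  + apply c0_weight_unbounded.
Qed.
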